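(* Let $\alpha>1$ and $D,R_{tot},L_0>0$. For $\mu>0$ let $\sigma_0=\sigma_0^{(\mu)}$ be the positive solution of $-u''=-u+u^\alpha$ on $[-\mu L_0,\mu L_0]$ with zero Dirichlet data, and $\|\sigma_0\|_1=\int_{-\mu L_0}^{\mu L_0}\sigma_0$. (i) Let $k_{nf},k_{pf}>0$ satisfy $$\Lambda(k_{nf},k_{pf})=\frac{k_{nf}}{k_{pf}}-\frac{1}{\alpha}\left(\frac{\alpha-1}{\alpha}\sqrt{\frac{k_{nf}}{D}}\frac{R_{tot}}{\|\sigma_0\|_1}\right)^{\alpha-1}\le 0,$$ where $\sigma_0=\sigma_0^{(\mu)}$ with $\mu=\sqrt{k_{nf}/D}$. Let $\lambda>0$ be a root of $g(\lambda)=\frac{k_{nf}}{k_{pf}}-\lambda^{\alpha-1}+\frac{1}{R_{tot}}\lambda^{\alpha}\frac{1}{\mu}\|\sigma_0\|_1$. Then $\mu>0$, $\lambda>0$ and $\Lambda^*(\mu,\lambda):=\mu R_{tot}-\lambda\|\sigma_0\|_1>0$. (ii) Conversely, let $\mu>0$, $\lambda>0$ with $\Lambda^*(\mu,\lambda)>0$, and define $k_{nf}=D\mu^2$ and $$k_{pf}=\frac{D\mu^2}{\lambda^{\alpha-1}-\frac{\lambda^{\alpha}\|\sigma_0\|_1}{\mu R_{tot}}}.$$ Then $k_{nf}>0$, $k_{pf}>0$, $\Lambda(k_{nf},k_{pf})\le0$, and $\lambda$ is a root of $g$ for these parameters. Thus the constrained model $Y_j=R(X_j;k_{nf},k_{pf})+\epsilon_j$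 (with $R$ a solution of the integro-differential equation $-DR''=-k_{nf}R+k_{pf}R^\alpha(1-\int_{-L_0}^{L_0}R/R_{tot})$, $R(\pm L_0)=0$) is equivalently reparametrized as $Y_j=\lambda\sigma_0(\mu X_j)+\epsilon_j$ subject to $\mu>0$, $\lambda>0$, $\Lambda^*(\mu,\lambda)>0$.
   Context: The positive solution of $-u''=-u+u^\alpha$ with zero Dirichlet data on a bounded symmetric interval exists and is unique (part of the setting). For given $(k_{nf},k_{pf})$, $\lambda\sigma_0(\mu x)$ with $\mu=\sqrt{k_{nf}/D}$ solves the integro-differential equation iff $g(\lambda)=0$. *)

From Stdlib Require Import Reals.
Open Scope R_scope.

Definition is_pos_dirichlet_sol (alpha a : R) (u : R -> R) : Prop :=
  (exists u' u'' : R -> R,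
      forall x, -a < x < a ->
        derivable_pt_lim u x (u' x) /\
        derivable_pt_lim u' x (u'' x) /\
        - u'' x = - u x + Rpower (u x) alpha) /\
  (forall x, -a <= x <= a -> continuity_pt u x) /\
  u (-a) = 0 /\ u a = 0 /\
  (forall x, -a < x < a -> 0 < u x).

(* N mu stands for ||sigma_0^(mu)||_1 . *)

Definition Lambda (alpha D Rtot : R) (N : R -> R) (knf kpf : R) : R :=
  knf / kpf
  - / alpha * Rpower ((alpha - 1) / alpha * sqrt (knf / D) * Rtot
                      / N (sqrt (knf / D))) (alpha - 1).

Definition g (alpha D Rtot : R) (N : R -> R) (knf kpf lam : R) : R :=
  knf / kpf - Rpower lam (alpha - 1)
  + / Rtot * Rpower lam alpha * / sqrt (knf / D) * N (sqrt (knf / D)).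

Definition LambdaStar (Rtot : R) (N : R -> R) (mu lam : R) : R :=
  mu * Rtot - lam * N mu.

(* The only analytic input is ||sigma_0||_1 > 0, which holds because sigma_0 is
   positive and continuous in the middle of its interval. Everything else is
   algebra around the identity
     lam^(alpha-1) - lam^alpha ||sigma_0||_1 / (mu Rtot)
       = lam^(alpha-1) Lambda^*(mu, lam) / (mu Rtot),
   which makes g(lam) = 0 equivalent to k_nf/k_pf = lam^(alpha-1) (1 - lam/M)
   with M = mu Rtot / ||sigma_0||_1. The bound Lambda <= 0 then says that this
   value does not exceed the maximum of t |-> t^(alpha-1) (1 - t/M) on (0, M),
   attained at t = (alpha-1) M / alpha. *)

From Stdlib Require Import Reals Lra.
Open Scope R_scope.

Lemma RiemannInt_ge_const (f : R -> R) (a b c : R)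
  (pr : Riemann_integrable f a b) :
  a <= b -> (forall x, a < x < b -> c <= f x) -> c * (b - a) <= RiemannInt pr.
Proof.
  intros Hab Hc.
  rewrite <- (RiemannInt_P15 (RiemannInt_P14 a b c)).
  apply RiemannInt_P19; [exact Hab|].
  intros x Hx; apply Hc, Hx.
Qed.

Lemma RiemannInt_pos_of_pos (f : R -> R) (a : R)
  (pr : Riemann_integrable f (- a) a) :
  0 < a -> (forall x, - a < x < a -> 0 < f x) -> continuity_pt f 0 ->
  0 < RiemannInt pr.
Proof.
  intros Ha Hpos Hcont.
  assert (Hf0 : 0 < f 0) by (apply Hpos; lra).
  destruct (Hcont (f 0 / 2)) as [r [Hr Hnear]]; [lra|].
  set (d := Rmin r a / 2).
  assert (Hd : 0 < d /\ d < a /\ d < r).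
  { assert (0 < Rmin r a) by (apply Rmin_glb_lt; lra).
    pose proof (Rmin_l r a); pose proof (Rmin_r r a); unfold d; lra. }
  assert (Hhalf : forall x, - d < x < d -> f 0 / 2 <= f x).
  { intros x Hx.
    destruct (Req_dec x 0) as [->|Hx0]; [lra|].
    assert (Hdist : Rabs (f x - f 0) < f 0 / 2).
    { apply (Hnear x); split; [split; [exact I|congruence]|].
      simpl; unfold R_dist; apply Rabs_def1; lra. }
    apply Rabs_def2 in Hdist; lra. }
  assert (prl : Riemann_integrable f (- a) (- d)) by (apply (RiemannInt_P22 pr); lra).
  assert (prr : Riemann_integrable f (- d) a) by (apply (RiemannInt_P23 pr); lra).
  assert (prm : Riemann_integrable f (- d) d) by (apply (RiemannInt_P22 prr); lra).
  assert (pre : Riemann_integrable f d a) by (apply (RiemannInt_P23 prr); lra).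
  rewrite <- (RiemannInt_P25 prl prr pr), <- (RiemannInt_P25 prm pre prr) by lra.
  pose proof (RiemannInt_ge_const f _ _ 0 prl ltac:(lra)
                (fun x Hx => Rlt_le _ _ (Hpos x ltac:(lra)))).
  pose proof (RiemannInt_ge_const f _ _ 0 pre ltac:(lra)
                (fun x Hx => Rlt_le _ _ (Hpos x ltac:(lra)))).
  pose proof (RiemannInt_ge_const f _ _ _ prm ltac:(lra) Hhalf).
  assert (0 < f 0 / 2 * (d - - d)) by (apply Rmult_lt_0_compat; lra).
  lra.
Qed.

Lemma ln_le_sub_1 (x : R) : 0 < x -> ln x <= x - 1.
Proof.
  intros Hx; pose proof (exp_ineq1_le (ln x)) as H.
  rewrite exp_ln in H by exact Hx; lra.
Qed.

Lemma Rpower_pos (x y : R) : 0 < Rpower x y.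
Proof. apply exp_pos. Qed.

Lemma Rpower_sub_1 (x y : R) : 0 < x -> Rpower x y = Rpower x (y - 1) * x.
Proof.
  intros Hx; replace y with (y - 1 + 1) at 1 by ring.
  now rewrite Rpower_plus, Rpower_1.
Qed.

(* Weighted AM-GM through ln t <= t - 1, applied at t = lam/q and
   t = alpha (1 - lam/M); the weights alpha - 1 and 1 make the right-hand
   sides cancel. *)
Lemma Rpower_one_sub_div_le_max (alpha lam M : R) :
  1 < alpha -> 0 < lam < M ->
  Rpower lam (alpha - 1) * (1 - lam / M)
    <= / alpha * Rpower ((alpha - 1) / alpha * M) (alpha - 1).
Proof.
  intros Ha [Hlam HlamM].
  set (q := (alpha - 1) / alpha * M).
  assert (Hq : 0 < q) by (unfold q, Rdiv; repeat apply Rmult_lt_0_compat;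
                          try apply Rinv_0_lt_compat; lra).
  assert (Hrest : 0 < alpha * (1 - lam / M)).
  { apply Rmult_lt_0_compat; [lra|].
    replace (1 - lam / M) with ((M - lam) / M) by (field; lra).
    apply Rdiv_lt_0_compat; lra. }
  set (t := Rpower (lam / q) (alpha - 1) * (alpha * (1 - lam / M))).
  assert (Hlnt : ln t <= 0).
  { assert (Hlq : 0 < lam / q) by (apply Rdiv_lt_0_compat; lra).
    unfold t; rewrite ln_mult, ln_Rpower by (apply Rpower_pos || exact Hrest).
    pose proof (ln_le_sub_1 _ Hlq); pose proof (ln_le_sub_1 _ Hrest).
    assert (Hcancel : (alpha - 1) * (lam / q - 1) + (alpha * (1 - lam / M) - 1) = 0)
      by (unfold q; field; lra).
    nra. }
  assert (Ht1 : t <= 1).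
  { apply Rnot_lt_le; intros Hlt.
    pose proof (ln_increasing 1 t Rlt_0_1 Hlt); rewrite ln_1 in *; lra. }
  assert (Hsplit : Rpower lam (alpha - 1) = Rpower (lam / q) (alpha - 1) * Rpower q (alpha - 1)).
  { rewrite Rpower_mult_distr by (try apply Rdiv_lt_0_compat; lra).
    f_equal; field; lra. }
  apply Rmult_le_reg_l with alpha; [lra|].
  rewrite <- (Rmult_assoc alpha (/ alpha)), Rinv_r, Rmult_1_l by lra.
  rewrite Hsplit.
  pose proof (Rpower_pos q (alpha - 1)).
  unfold t in Ht1; nra.
Qed.

Lemma Rpower_gap_LambdaStar (alpha Rtot : R) (N : R -> R) (mu lam : R) :
  0 < mu -> 0 < Rtot -> 0 < lam ->
  Rpower lam (alpha - 1) - Rpower lam alpha * N mu / (mu * Rtot)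
    = Rpower lam (alpha - 1) * LambdaStar Rtot N mu lam / (mu * Rtot).
Proof.
  intros Hmu HR Hlam.
  unfold LambdaStar; rewrite (Rpower_sub_1 lam alpha Hlam); field; lra.
Qed.

Lemma g_eq_ratio_sub_gap (alpha D Rtot : R) (N : R -> R) (knf kpf lam : R) :
  g alpha D Rtot N knf kpf lam
    = knf / kpf - (Rpower lam (alpha - 1)
                   - Rpower lam alpha * N (sqrt (knf / D)) / (sqrt (knf / D) * Rtot)).
Proof. unfold g, Rdiv; rewrite Rinv_mult; ring. Qed.

Lemma LambdaStar_pos_of_g_root (alpha D Rtot : R) (N : R -> R) (knf kpf lam : R) :
  0 < D -> 0 < Rtot -> 0 < knf -> 0 < kpf -> 0 < lam ->
  g alpha D Rtot N knf kpf lam = 0 ->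
  0 < LambdaStar Rtot N (sqrt (knf / D)) lam.
Proof.
  intros HD HR Hknf Hkpf Hlam Hg.
  assert (Hmu : 0 < sqrt (knf / D)) by (apply sqrt_lt_R0, Rdiv_lt_0_compat; lra).
  rewrite g_eq_ratio_sub_gap, Rpower_gap_LambdaStar in Hg by assumption.
  apply Rminus_diag_uniq in Hg.
  set (X := LambdaStar Rtot N (sqrt (knf / D)) lam) in *.
  set (P := Rpower lam (alpha - 1)) in *.
  set (c := sqrt (knf / D) * Rtot) in *.
  assert (Hc : 0 < c) by (apply Rmult_lt_0_compat; lra).
  assert (HP : 0 < P) by apply Rpower_pos.
  assert (HPX : P * X = knf / kpf * c) by (rewrite Hg; field; lra).
  assert (0 < knf / kpf) by (apply Rdiv_lt_0_compat; lra).
  nra.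
Qed.

Lemma Lambda_nonpos_of_ratio (alpha D Rtot : R) (N : R -> R) (knf kpf mu lam : R) :
  1 < alpha -> 0 < Rtot -> 0 < mu -> 0 < lam -> 0 < N mu ->
  0 < LambdaStar Rtot N mu lam ->
  sqrt (knf / D) = mu ->
  knf / kpf = Rpower lam (alpha - 1) - Rpower lam alpha * N mu / (mu * Rtot) ->
  Lambda alpha D Rtot N knf kpf <= 0.
Proof.
  intros Ha HR Hmu Hlam HN HLS Hsqrt Hratio.
  unfold Lambda; rewrite Hsqrt, Hratio, Rpower_gap_LambdaStar by assumption.
  set (M := mu * Rtot / N mu).
  assert (HlamM : lam < M).
  { unfold LambdaStar in HLS; unfold M.
    apply (Rmult_lt_reg_r (N mu)); [exact HN|].
    replace (mu * Rtot / N mu * N mu) with (mu * Rtot) by (field; lra); lra. }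
  replace (Rpower lam (alpha - 1) * LambdaStar Rtot N mu lam / (mu * Rtot))
    with (Rpower lam (alpha - 1) * (1 - lam / M))
    by (unfold LambdaStar, M; field; lra).
  replace ((alpha - 1) / alpha * mu * Rtot / N mu) with ((alpha - 1) / alpha * M)
    by (unfold M; field; lra).
  pose proof (Rpower_one_sub_div_le_max alpha lam M Ha (conj Hlam HlamM)).
  lra.
Qed.

Lemma reparametrized_rates (alpha D Rtot : R) (N : R -> R) (mu lam : R) :
  1 < alpha -> 0 < D -> 0 < Rtot -> 0 < mu -> 0 < lam -> 0 < N mu ->
  0 < LambdaStar Rtot N mu lam ->
  let knf := D * mu ^ 2 in
  let kpf := D * mu ^ 2 /
             (Rpower lam (alpha - 1) - Rpower lam alpha * N mu / (mu * Rtot)) in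
  0 < knf /\ 0 < kpf /\
  Lambda alpha D Rtot N knf kpf <= 0 /\
  g alpha D Rtot N knf kpf lam = 0.
Proof.
  intros Ha HD HR Hmu Hlam HN HLS knf kpf.
  set (gap := Rpower lam (alpha - 1) - Rpower lam alpha * N mu / (mu * Rtot)) in *.
  assert (Hgap : 0 < gap).
  { unfold gap; rewrite Rpower_gap_LambdaStar by assumption.
    pose proof (Rpower_pos lam (alpha - 1)).
    apply Rdiv_lt_0_compat; apply Rmult_lt_0_compat; lra. }
  assert (Hknf : 0 < knf) by (apply Rmult_lt_0_compat; [lra | apply pow_lt; lra]).
  assert (Hsqrt : sqrt (knf / D) = mu).
  { unfold knf; replace (D * mu ^ 2 / D) with (Rsqr mu) by (unfold Rsqr; field; lra).
    apply sqrt_Rsqr; lra. }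
  assert (Hratio : knf / kpf = gap) by (unfold kpf; fold knf; field; lra).
  split; [exact Hknf|]. split; [apply Rdiv_lt_0_compat; assumption|]. split.
  - exact (Lambda_nonpos_of_ratio alpha D Rtot N knf kpf mu lam
             Ha HR Hmu Hlam HN HLS Hsqrt Hratio).
  - rewrite g_eq_ratio_sub_gap, Hsqrt, Hratio; unfold gap; ring.
Qed.

Lemma Dirichlet_sol_integral_pos (alpha a : R) (u : R -> R)
  (pr : Riemann_integrable u (- a) a) :
  0 < a -> is_pos_dirichlet_sol alpha a u -> 0 < RiemannInt pr.
Proof.
  intros Ha [_ [Hcont [_ [_ Hpos]]]].
  apply RiemannInt_pos_of_pos; [exact Ha | exact Hpos | apply Hcont; lra].
Qed.

Theorem proposition1 (alpha D Rtot L0 : R)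
  (sigma0 : R -> R -> R) (N : R -> R) :
  1 < alpha -> 0 < D -> 0 < Rtot -> 0 < L0 ->
  (forall mu, 0 < mu -> is_pos_dirichlet_sol alpha (mu * L0) (sigma0 mu)) ->
  (forall mu, 0 < mu ->
     exists pr : Riemann_integrable (sigma0 mu) (- (mu * L0)) (mu * L0),
       RiemannInt pr = N mu) ->
  (forall knf kpf lam : R,
     0 < knf -> 0 < kpf ->
     Lambda alpha D Rtot N knf kpf <= 0 ->
     0 < lam -> g alpha D Rtot N knf kpf lam = 0 ->
     0 < sqrt (knf / D) /\ 0 < lam /\
     0 < LambdaStar Rtot N (sqrt (knf / D)) lam) /\
  (forall mu lam : R,
     0 < mu -> 0 < lam -> 0 < LambdaStar Rtot N mu lam ->
     let knf := D * mu ^ 2 in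
     let kpf := D * mu ^ 2 /
                (Rpower lam (alpha - 1) - Rpower lam alpha * N mu / (mu * Rtot)) in
     0 < knf /\ 0 < kpf /\
     Lambda alpha D Rtot N knf kpf <= 0 /\
     g alpha D Rtot N knf kpf lam = 0).
Proof.
  intros Ha HD HR HL0 Hsol HN; split.
  - (* (i) holds without the hypothesis Lambda <= 0. *)
    intros knf kpf lam Hknf Hkpf _ Hlam Hg.
    split; [apply sqrt_lt_R0, Rdiv_lt_0_compat; lra|].
    split; [exact Hlam|].
    exact (LambdaStar_pos_of_g_root alpha D Rtot N knf kpf lam HD HR Hknf Hkpf Hlam Hg).
  - intros mu lam Hmu Hlam HLS.
    assert (HNpos : 0 < N mu).
    { destruct (HN mu Hmu) as [pr <-].
      apply (Dirichlet_sol_integral_pos alpha); [apply Rmult_lt_0_compat; lra|].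
      exact (Hsol mu Hmu). }
    exact (reparametrized_rates alpha D Rtot N mu lam Ha HD HR Hmu Hlam HNpos HLS).
Qed.
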